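(* Let $n,d\in\mathbf{N}$ and let $\overline{F},\overline{G}:\mathbf{N}^d\to\mathbf{Z}_+$ be order-reversing functions such that $\overline{F}_{\mathbf{a}}=\overline{G}_{\mathbf{a}}=0$ for every upper boundary point $\mathbf{a}$ of $[n]^d$. Let $F:=\overline{F}|_{[n]^d}$ and $G:=\overline{G}|_{[n]^d}$. Then \[d_{\mathrm{I}}(\overline{F},\overline{G})=\min\{k\in\{0,1,\dots,n-1\}:\text{the $k$-test for $(F,G)$ returns ''Yes''}\}.\]
   Context: $\mathbf{N}=\{1,2,\dots\}$ with the product order on $\mathbf{N}^d$; $[n]=\{1,\dots,n\}$ and $[n]^d\subseteq\mathbf{N}^d$. A point $\mathbf{a}=(a_1,\dots,a_d)\in[n]^d$ is an upper boundary point of $[n]^d$ if $a_i=n$ for some $i$. Order-reversing means $\mathbf{a}\le\mathbf{b}\Rightarrow \overline{F}_{\mathbf{a}}\ge\overline{F}_{\mathbf{b}}$. The interleaving distance between order-reversing $\overline{F},\overline{G}:\mathbf{N}^d\to\mathbf{Z}_+$ (regarded as functors into the poset $\mathbf{Z}_+^{\mathrm{op}}$) is $d_{\mathrm{I}}(\overline{F},\overline{G}):=\inf\{k\in\mathbf{Z}_+:\forall\mathbf{a}\in\mathbf{N}^d,\ \overline{F}_{\mathbf{a}}\ge\overline{G}_{\mathbf{a}+k(1,\dots,1)}\text{ and }\overline{G}_{\mathbf{a}}\ge\overline{F}_{\mathbf{a}+k(1,\dots,1)}\}$. For $F:[n]^d\to\mathbf{Z}_+$ and $k\in\{0,\dots,n-1\}$,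 the lower-left block $F|_{[n-k]^d}$ is the restriction to $[n-k]^d$ and the upper-right block $F|^{[n-k]^d}:[n-k]^d\to\mathbf{Z}_+$ is $\mathbf{a}\mapsto F_{\mathbf{a}+k(1,\dots,1)}$. For functions $H,K$ on the same domain, $H\ge K$ means pointwise. The $k$-test for $(F,G)$ returns ''Yes'' iff $F|_{[n-k]^d}\ge G|^{[n-k]^d}$ and $G|_{[n-k]^d}\ge F|^{[n-k]^d}$, and ''No'' otherwise. *)

From mathcomp Require Import all_boot.
Set Implicit Arguments. Unset Strict Implicit. Unset Printing Implicit Defensive.

(* Points of N^d (N = {1,2,...}) are represented as functions 'I_d -> nat
   whose coordinates are all >= 1. *)
Definition point (d : nat) := 'I_d -> nat.

Definition inNd d (a : point d) : Prop := forall i, 1 <= a i.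

Definition in_box d (m : nat) (a : point d) : Prop := forall i, 1 <= a i <= m.

Definition ple d (a b : point d) : Prop := forall i, a i <= b i.

Definition shift d (a : point d) (k : nat) : point d := fun i => a i + k.

Definition upper_boundary d (n : nat) (a : point d) : Prop :=
  in_box n a /\ exists i, a i = n.

Definition order_reversing d (F : point d -> nat) : Prop :=
  forall a b, inNd a -> inNd b -> ple a b -> F b <= F a.

Definition interleaved d (F G : point d -> nat) (k : nat) : Prop :=
  forall a, inNd a -> G (shift a k) <= F a /\ F (shift a k) <= G a.

Definition restrict d (n : nat) (F : point d -> nat) : {a : point d | in_box n a} -> nat :=
  fun a => F (proj1_sig a).

Definition ktest d (n : nat) (F G : {a : point d | in_box n a} -> nat) (k : nat) : Prop :=
  forall (a : point d) (Ha : in_box (n - k) a) (Ha1 : in_box n a) (Hak : in_box n (shift a k)),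
    G (exist _ (shift a k) Hak) <= F (exist _ a Ha1) /\
    F (exist _ (shift a k) Hak) <= G (exist _ a Ha1).

Definition is_min_nat (P : nat -> Prop) (m : nat) : Prop :=
  P m /\ forall k, P k -> m <= k.
Arguments ktest {d} n F G k.
Arguments restrict {d} n F.

From mathcomp Require Import all_boot zify.
From Stdlib Require Import Classical.

Set Implicit Arguments.
Unset Strict Implicit.

(* An order-reversing function vanishing on the upper boundary of [n]^d also
   vanishes at every point of N^d beyond that boundary, so shifting by
   k(1,...,1) only matters for points of [n-k]^d: there the interleaving
   condition is exactly the k-test, and at k = n-1 it holds trivially. *)

Lemma is_min_nat_exists (P : nat -> Prop) (N : nat) : P N -> exists m, is_min_nat P m.
Proof.
elim/ltn_ind: N => N IH PN.
have [[k [ltkN Pk]] | noPbelow] := classic (exists k, k < N /\ P k).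
  exact: IH k ltkN Pk.
exists N; split=> // k Pk; rewrite leqNgt; apply/negP=> ltkN.
by apply: noPbelow; exists k.
Qed.

Lemma eq_is_min_nat (P Q : nat -> Prop) (m : nat) :
  (forall k, P k <-> Q k) -> is_min_nat P m -> is_min_nat Q m.
Proof.
move=> PQ [Pm minm]; split; first exact/PQ.
by move=> k /PQ; apply: minm.
Qed.

Lemma is_min_nat_bounded (P : nat -> Prop) (N m : nat) :
  P N -> is_min_nat P m -> is_min_nat (fun k => k <= N /\ P k) m.
Proof. by move=> PN [Pm minm]; split=> [|k [_ /minm]] //; split=> //; apply: minm. Qed.

Definition vanishes_beyond d (n : nat) (F : point d -> nat) : Prop :=
  forall b, inNd b -> (exists i, n <= b i) -> F b = 0.

Lemma inNd_shift d (a : point d) (k : nat) : inNd a -> inNd (shift a k).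
Proof. by move=> Na i; have := Na i; rewrite /shift; lia. Qed.

Lemma order_reversing_vanishes_beyond d (n : nat) (F : point d -> nat) :
  1 <= n -> order_reversing F -> (forall a, upper_boundary n a -> F a = 0) ->
  vanishes_beyond n F.
Proof.
move=> n_gt0 revF F0 b Nb [i le_n_bi].
pose c : point d := fun j => minn (b j) n.
have c_upper : upper_boundary n c.
  by split=> [j|]; [have := Nb j | exists i]; rewrite /c; lia.
have Nc : inNd c by move=> j; have := Nb j; rewrite /c; lia.
have : F b <= F c by apply: revF => // j; rewrite /c; lia.
by rewrite (F0 c c_upper); lia.
Qed.

Section InterleavingTest.

Variables (n d : nat) (Fbar Gbar : point d -> nat).
Hypotheses (F0 : vanishes_beyond n Fbar) (G0 : vanishes_beyond n Gbar).

Lemma interleaved_iff_ktest (k : nat) :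
  interleaved Fbar Gbar k <-> ktest n (restrict n Fbar) (restrict n Gbar) k.
Proof.
split=> [intFG a a_box a_box1 ak_box | test a Na].
  by apply: intFG => i; have := a_box i; lia.
have [/forallP a_small | /forallPn [i a_big]] := boolP [forall i, a i <= n - k].
  have a_box : in_box (n - k) a by move=> i; have := Na i; have := a_small i; lia.
  have a_box1 : in_box n a by move=> i; have := a_box i; lia.
  have ak_box : in_box n (shift a k) by move=> i; have := a_box i; rewrite /shift; lia.
  exact: (test a a_box a_box1 ak_box).
have ak_beyond : exists i, n <= shift a k i by exists i; rewrite /shift; lia.
by rewrite (F0 (inNd_shift k Na) ak_beyond) (G0 (inNd_shift k Na) ak_beyond).
Qed.

Lemma interleaved_pred_n : 0 < d -> interleaved Fbar Gbar (n - 1).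
Proof.
move=> d_gt0 a Na.
have a_beyond : exists i, n <= shift a (n - 1) i.
  by exists (Ordinal d_gt0); have := Na (Ordinal d_gt0); rewrite /shift; lia.
by rewrite (F0 (inNd_shift _ Na) a_beyond) (G0 (inNd_shift _ Na) a_beyond).
Qed.

End InterleavingTest.

Theorem proposition5p3 (n d : nat) (Fbar Gbar : point d -> nat) :
  1 <= n -> 1 <= d ->
  order_reversing Fbar -> order_reversing Gbar ->
  (forall a, upper_boundary n a -> Fbar a = 0 /\ Gbar a = 0) ->
  exists m,
    is_min_nat (interleaved Fbar Gbar) m /\
    is_min_nat (fun k => k <= n - 1 /\ ktest n (restrict n Fbar) (restrict n Gbar) k) m.
Proof.
move=> n_gt0 d_gt0 revF revG FG0.
have F0 := order_reversing_vanishes_beyond n_gt0 revF (fun a ua => (FG0 a ua).1).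
have G0 := order_reversing_vanishes_beyond n_gt0 revG (fun a ua => (FG0 a ua).2).
have int_n1 := interleaved_pred_n F0 G0 d_gt0.
have [m min_m] := is_min_nat_exists int_n1.
exists m; split=> //.
apply: is_min_nat_bounded; first exact/interleaved_iff_ktest.
exact: eq_is_min_nat (interleaved_iff_ktest F0 G0) min_m.
Qed.
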